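(* Let $X$ be a topological space whose one point compactification $X^*=X\cup\{\infty\}$ is metrizable, and let $T\colon X\to X$ be continuous. Then there exist a compact metrizable space $Z$, a continuous map $S\colon Z\to Z$ and a topological embedding $\iota\colon X\to Z$ with $S\circ\iota=\iota\circ T$ (so that, identifying $X$ with $\iota(X)$ with the induced topology, $T$ is the restriction of $S$). Moreover, the map $\pi\colon Z\to X^*$ given by $\pi(\iota(x))=x$ for $x\in X$ and $\pi(z)=\infty$ for $z\notin\iota(X)$ is continuous. *)

From HB Require Import structures.
From mathcomp Require Import all_boot all_order all_algebra.
From mathcomp Require Import all_classical all_reals all_analysis.
From mathcomp Require Import Rstruct Rstruct_topology.
From Stdlib Require Import Reals.
Set Implicit Arguments. Unset Strict Implicit. Unset Printing Implicit Defensive.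
Import Order.TTheory GRing.Theory Num.Theory.
Local Open Scope classical_set_scope.
Local Open Scope ring_scope.

Definition is_metric (T : Type) (d : T -> T -> R) : Prop :=
  [/\ forall x y, d x y = 0 <-> x = y,
      forall x y, d x y = d y x &
      forall x y z, d x z <= d x y + d y z].

Definition metrizable (T : topologicalType) : Prop :=
  exists d : T -> T -> R, is_metric d /\
    forall (x : T) (A : set T),
      nbhs x A <-> exists e : R, 0 < e /\ [set y | d x y < e] `<=` A.

(* Topological embedding: injective, continuous, and a homeomorphism onto its
   image with the subspace topology, i.e. every open set of the domain is the
   preimage of an open set of the codomain. *)
Definition topological_embedding (X Z : topologicalType) (i : X -> Z) : Prop :=
  [/\ injective i, continuous i &
      forall U : set X, open U -> exists V : set Z, open V /\ i @^-1` V = U].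

(* Take Z to be the closure of the set of orbits x |-> (T^n x)_n inside the
   countable power X*^N, with S the shift.  The power of a compact metrizable
   space is compact (Tychonoff) and metrizable, with the metric
   sup_n min(d(p_n, q_n), 1) / (n + 1); hence so is the closed subspace Z.  The
   orbit map is an embedding because its first coordinate is the inclusion of X
   into X*, and the first coordinate is also the map pi: in the Hausdorff space
   X*, a limit of orbits whose first coordinate is a point x of X must be the
   orbit of x, so that every point of Z outside the orbits starts at infinity. *)

From HB Require Import structures.
From mathcomp Require Import all_boot all_order all_algebra.
From mathcomp Require Import all_classical all_reals all_analysis.
From mathcomp Require Import Rstruct Rstruct_topology.
From mathcomp Require Import lra.
Set Implicit Arguments. Unset Strict Implicit. Unset Printing Implicit Defensive.
Import Order.TTheory GRing.Theory Num.Theory.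
Local Open Scope classical_set_scope.
Local Open Scope ring_scope.
Local Notation R := Rdefinitions.R.

Section sequence_metric.
Variables (Y : Type) (d : Y -> Y -> R).
Hypothesis d_metric : is_metric d.

Lemma metric_ge0 a b : 0 <= d a b.
Proof.
case: d_metric => d0 dC dtri; have := dtri a b a.
by rewrite (proj2 (d0 a a) erefl) (dC b a) => ?; lra.
Qed.

Definition trunc_dist a b : R := Num.min (d a b) 1.

Lemma trunc_dist_ge0 a b : 0 <= trunc_dist a b.
Proof. by rewrite /trunc_dist le_min metric_ge0 ler01. Qed.

Lemma trunc_dist_le1 a b : trunc_dist a b <= 1.
Proof. by rewrite /trunc_dist ge_min lexx orbT. Qed.

Lemma trunc_dist_le a b : trunc_dist a b <= d a b.
Proof. by rewrite /trunc_dist ge_min lexx. Qed.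

Lemma trunc_distC a b : trunc_dist a b = trunc_dist b a.
Proof. by case: d_metric => _ dC _; rewrite /trunc_dist dC. Qed.

Lemma trunc_dist_triangle a b c : trunc_dist a c <= trunc_dist a b + trunc_dist b c.
Proof.
case: d_metric => _ _ /(_ a b c); rewrite /trunc_dist.
have := metric_ge0 a b; have := metric_ge0 b c.
by case: (leP (d a b) 1) => ?; case: (leP (d b c) 1) => ?;
  case: (leP (d a c) 1) => ?; lra.
Qed.

Lemma trunc_dist_xx a : trunc_dist a a = 0.
Proof.
case: d_metric => d0 _ _; rewrite /trunc_dist (proj2 (d0 a a) erefl).
exact/min_idPl/ler01.
Qed.

Lemma trunc_dist_eq0 a b : trunc_dist a b = 0 -> a = b.
Proof.
case: d_metric => d0 _ _; rewrite /trunc_dist => h; apply/d0.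
by move: h; case: (leP (d a b) 1) => //; lra.
Qed.

Lemma trunc_dist_lt a b (e : R) : trunc_dist a b < Num.min e 1 -> d a b < e.
Proof.
by rewrite /trunc_dist; case: (leP (d a b) 1) => ?; case: (leP e 1) => ?; lra.
Qed.

Definition coord_dist (p q : nat -> Y) (n : nat) : R :=
  trunc_dist (p n) (q n) / n.+1%:R.

Definition seq_dist (p q : nat -> Y) : R := sup (range (coord_dist p q)).

Lemma coord_dist_ge0 p q n : 0 <= coord_dist p q n.
Proof. by rewrite divr_ge0 // trunc_dist_ge0. Qed.

Lemma coord_dist_le_inv p q n : coord_dist p q n <= n.+1%:R^-1.
Proof.
by rewrite /coord_dist -[leRHS]mul1r ler_pM2r ?invr_gt0 // trunc_dist_le1.
Qed.

Lemma coord_dist_le_trunc p q n : coord_dist p q n <= trunc_dist (p n) (q n).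
Proof. by rewrite ler_pdivrMr // ler_peMr ?trunc_dist_ge0 // ler1n. Qed.

Lemma coord_dist_le_seq_dist p q n : coord_dist p q n <= seq_dist p q.
Proof.
apply: ub_le_sup; last by exists n.
exists 1 => _ [m _ <-]; apply: le_trans (coord_dist_le_inv p q m) _.
by rewrite invf_le1 // ler1n.
Qed.

Lemma seq_dist_le p q (c : R) : (forall n, coord_dist p q n <= c) -> seq_dist p q <= c.
Proof.
by move=> h; apply: ge_sup; [exists (coord_dist p q 0), 0 | move=> _ [n _ <-]].
Qed.

Lemma seq_dist_lt_coord p q n (e : R) :
  seq_dist p q < Num.min e 1 / n.+1%:R -> d (p n) (q n) < e.
Proof.
move=> /(le_lt_trans (coord_dist_le_seq_dist p q n)).
by rewrite ltr_pM2r ?invr_gt0 //; exact: trunc_dist_lt.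
Qed.

(* Beyond index N the weights 1/(n+1) are already below e. *)
Lemma seq_dist_le_prefix p q (e : R) (N : nat) : 0 < e -> e^-1 <= N%:R ->
  (forall i, (i < N)%N -> d (p i) (q i) <= e) -> seq_dist p q <= e.
Proof.
move=> e0 eN dle; apply: seq_dist_le => n; have [nN|Nn] := ltnP n N.
  apply: le_trans (coord_dist_le_trunc p q n) _.
  exact: le_trans (trunc_dist_le _ _) (dle n nN).
apply: le_trans (coord_dist_le_inv p q n) _.
rewrite invf_ple ?posrE //; apply: le_trans eN _.
by rewrite ler_nat; exact: leqW.
Qed.

Lemma seq_dist_metric : is_metric seq_dist.
Proof.
split.
- move=> p q; split=> [pq0|<-]; last first.
    apply/eqP; rewrite eq_le (le_trans (coord_dist_ge0 p p 0)) ?coord_dist_le_seq_dist //.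
    by rewrite andbT; apply: seq_dist_le => n; rewrite /coord_dist trunc_dist_xx mul0r.
  apply: funext => n; apply: trunc_dist_eq0.
  have : coord_dist p q n = 0.
    apply/eqP; rewrite eq_le coord_dist_ge0 andbT -pq0.
    exact: coord_dist_le_seq_dist.
  by move/eqP; rewrite mulf_eq0 invr_eq0 pnatr_eq0 orbF => /eqP.
- move=> p q; rewrite /seq_dist; suff -> : coord_dist p q = coord_dist q p by [].
  by apply: funext => n; rewrite /coord_dist trunc_distC.
- move=> p q r; apply: seq_dist_le => n.
  apply: le_trans (lerD (coord_dist_le_seq_dist p q n) (coord_dist_le_seq_dist q r n)).
  by rewrite -mulrDl ler_pM2r ?invr_gt0 // trunc_dist_triangle.
Qed.

End sequence_metric.

Lemma prod_topology_cvg (I : eqType) (K : I -> topologicalType)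
    (F : set_system (prod_topology K)) (f : prod_topology K) :
  Filter F -> (forall i, (fun g : prod_topology K => g i) @ F --> f i) -> F --> f.
Proof.
move=> FF Fcvg; apply/cvg_sup => i U [V] [[W] oW <-] Wfi VU.
by apply: (filterS VU); apply: (Fcvg i); exact: open_nbhs_nbhs.
Qed.

Section sequence_metric_topology.
Variables (Y : topologicalType) (d : Y -> Y -> R).
Hypotheses (d_metric : is_metric d)
  (d_nbhs : forall (y : Y) (A : set Y),
      nbhs y A <-> exists e : R, 0 < e /\ [set z | d y z < e] `<=` A).
Local Notation P := (prod_topology (fun _ : nat => Y)).

Lemma nbhs_seq_dist_ball (p : P) (W : set P) : nbhs p W ->
  exists e : R, 0 < e /\ [set q | seq_dist d p q < e] `<=` W.
Proof.
pose B := filter_from [set e : R | 0 < e] (fun e => [set q | seq_dist d p q < e]).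
have FB : Filter B.
  apply: filter_from_filter; first by exists 1; rewrite /= ltr01.
  move=> a b a0 b0; exists (Num.min a b); first by rewrite /= lt_min a0.
  by move=> q /=; rewrite lt_min => /andP.
suff /(_ W) Bcvg : B --> p by move=> /Bcvg [e e0 sub]; exists e.
apply: prod_topology_cvg => i U /d_nbhs [e [e0 sub]].
exists (Num.min e 1 / i.+1%:R); first by rewrite /= divr_gt0 // lt_min e0 ltr01.
by move=> q /= /seq_dist_lt_coord; exact: sub.
Qed.

Lemma nbhs_prefix_ball (p : P) (e : R) (N : nat) : 0 < e ->
  nbhs p [set q : P | forall i, (i < N)%N -> d (p i) (q i) < e].
Proof.
move=> e0; have p_filter : Filter (@nbhs P P p) := nbhs_filter p.
elim: N => [|N IH].
  by apply: filterS (@filterT _ _ p_filter) => q _ i; rewrite ltn0.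
have ballN : nbhs p ((fun q : P => q N) @^-1` [set y | d (p N) y < e]).
  apply: (@proj_continuous nat (fun _ => Y) N p).
  by apply/d_nbhs; exists e; split.
apply: filterS (@filterI _ _ p_filter _ _ IH ballN) => q [qlt qN] i.
by rewrite ltnS leq_eqVlt; case/orP => [/eqP -> //|]; exact: qlt.
Qed.

Lemma seq_dist_ball_nbhs (p : P) (e : R) : 0 < e -> nbhs p [set q | seq_dist d p q < e].
Proof.
move=> e0; set N := Num.Def.archi_bound (e / 2)^-1.
have eN : (e / 2)^-1 <= N%:R by apply/ltW/archi_boundP; rewrite invr_ge0; lra.
have e20 : 0 < e / 2 by lra.
apply: (@filterS _ _ (nbhs_filter p) _ _ _ (@nbhs_prefix_ball p (e / 2) N e20)) => q dlt.
suff : seq_dist d p q <= e / 2 by rewrite /=; lra.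
by apply: (seq_dist_le_prefix d_metric e20 eN) => i /dlt/ltW.
Qed.

End sequence_metric_topology.

Lemma metrizable_nat_power (Y : topologicalType) :
  metrizable Y -> metrizable (prod_topology (fun _ : nat => Y)).
Proof.
case=> d [d_metric d_nbhs]; exists (seq_dist d); split.
  exact: seq_dist_metric.
move=> p W; split; first exact: nbhs_seq_dist_ball.
by case=> e [e0 sub]; apply: filterS sub _; exact: seq_dist_ball_nbhs.
Qed.

Lemma metrizable_hausdorff (Y : topologicalType) : metrizable Y -> hausdorff_space Y.
Proof.
case=> d [d_metric d_nbhs] p q pq; case: (d_metric) => d0 dC dtri; apply/d0.
apply/eqP; rewrite eq_le (metric_ge0 d_metric) andbT leNgt; apply/negP => dpq.
have ball_nbhs y : nbhs y [set z | d y z < d p q / 2].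
  by apply/d_nbhs; exists (d p q / 2); split => //; lra.
have [r [/= pr qr]] := pq _ _ (ball_nbhs p) (ball_nbhs q).
by have := dtri p r q; rewrite (dC r q); lra.
Qed.

Lemma iter_continuous (Y : topologicalType) (f : Y -> Y) (n : nat) :
  continuous f -> continuous (iter n f).
Proof.
move=> fcont; elim: n => [|n IH] y /=; first exact: cvg_id.
exact: (continuous_comp (IH y) (fcont _)).
Qed.

Section set_type_topology.
Variables (P : topologicalType) (A : set P).

Lemma set_val_continuous : continuous (set_val : set_type A -> P).
Proof. exact: initial_continuous. Qed.

Lemma nbhs_set_type (z : set_type A) (U : set (set_type A)) : nbhs z U ->
  exists W : set P, nbhs (set_val z) W /\ set_val @^-1` W `<=` U.
Proof. by case=> _ [[B oB <-] Bz] sub; exists B; split=> //; exact: open_nbhs_nbhs. Qed.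

Lemma continuous_set_type (W : topologicalType) (f : W -> set_type A) :
  continuous (set_val \o f) -> continuous f.
Proof.
move=> fcont w U /nbhs_set_type [V [nV sub]].
by apply: (@filterS _ _ (nbhs_filter w) _ _ _ (fcont w V nV)) => y; exact: sub.
Qed.

Lemma compact_set_type : compact A -> compact [set: set_type A].
Proof.
move=> Acompact F FF _.
have FA : (set_val @ F) A.
  by apply: (@filterS _ F _ setT) => [z _|]; [exact: set_valP|exact: filterT].
have [p [Ap clp]] := Acompact _ (fmap_proper_filter set_val FF) FA.
exists (exist _ p (mem_set Ap)); split => // U V FU /nbhs_set_type [W [nW sub]].
have : (set_val @ F) (set_val @` U) by apply: (@filterS _ F _ U) => // u Uu; exists u.
by move=> /(clp _ W) /(_ nW) [_ [[u Uu <-] Wu]]; exists u; split => //; exact: sub.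
Qed.

Lemma metrizable_set_type : metrizable P -> metrizable (set_type A).
Proof.
case=> d [[d0 dC dtri] d_nbhs].
exists (fun z w : set_type A => d (set_val z) (set_val w)); split.
  split=> [z w|z w|z w u]; [|exact: dC|exact: dtri].
  by split=> [/d0/val_inj|->]; last exact/d0.
move=> z U; split.
  move=> /nbhs_set_type [W [/d_nbhs [e [e0 eW]] sub]].
  by exists e; split => // w /eW /sub.
case=> e [e0 sub]; apply: filterS sub _.
have ball_nbhs : nbhs (set_val z) [set y | d (set_val z) y < e].
  by apply/d_nbhs; exists e; split.
exact: (set_val_continuous ball_nbhs).
Qed.

End set_type_topology.

Section shift.
Variable Y : topologicalType.
Local Notation P := (prod_topology (fun _ : nat => Y)).

Definition shift (p : P) : P := fun n => p n.+1.

Lemma shift_continuous : continuous shift.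
Proof.
move=> p; apply: (prod_topology_cvg (fmap_filter _ (nbhs_filter p))) => i U Ui.
exact: (@proj_continuous nat (fun _ => Y) i.+1 p U Ui).
Qed.

End shift.

Section orbit_closure.
Variables (X : topologicalType) (T : X -> X).
Hypothesis T_continuous : continuous T.
Local Notation Y := (one_point_compactification X).
Local Notation P := (prod_topology (fun _ : nat => Y)).

Definition orbit (x : X) : P := fun n => Some (iter n T x).

Definition orbit_closure : set P := closure (range orbit).

Local Notation Z := (set_type orbit_closure).

Lemma some_iter_continuous n : continuous ((Some : X -> Y) \o iter n T).
Proof.
move=> x; exact: (@continuous_comp X X Y (iter n T) Some x
  (@iter_continuous X T n T_continuous x)
  (@one_point_compactification_some_continuous X _)).
Qed.

Lemma orbit_continuous : continuous orbit.
Proof. move=> x; apply: prod_topology_cvg => i; exact: some_iter_continuous. Qed.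

Lemma shift_orbit x : shift (orbit x) = orbit (T x).
Proof. by apply: funext => n; rewrite /shift /orbit iterSr. Qed.

Lemma orbit_closure_orbit x : orbit_closure (orbit x).
Proof. by apply: subset_closure; exists x. Qed.

Lemma orbit_closure_shift p : orbit_closure p -> orbit_closure (shift p).
Proof.
move=> clp B /shift_continuous /clp [_ [[x _ <-] Bx]].
by exists (orbit (T x)); split; [exists (T x)|rewrite -shift_orbit].
Qed.

Lemma compact_orbit_closure : compact [set: Z].
Proof.
apply/compact_set_type/(subclosed_compact (@closed_closure _ _) _ (@subsetT _ _)).
have := @tychonoff nat (fun _ => Y) (fun _ => [set: Y])
  (fun _ => one_point_compactification_compact).
by congr compact; apply/seteqP; split.
Qed.

(* Were [p n] different from [Some (T^n x)], separating neighbourhoods of the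
   two would give a neighbourhood of [p] containing no orbit. *)
Lemma orbit_closure_some p x : hausdorff_space Y ->
  orbit_closure p -> p 0%N = Some x -> p = orbit x.
Proof.
move=> Yhausdorff clp p0; apply: funext => n; apply: Yhausdorff => U V Un Vx.
have near_p : nbhs p
    ((fun q : P => q 0%N) @^-1` (Some @` (((Some : X -> Y) \o iter n T) @^-1` V))
     `&` (fun q : P => q n) @^-1` U).
  apply: filterI; last exact: (@proj_continuous nat (fun _ => Y) n p).
  apply: (@proj_continuous nat (fun _ => Y) 0%N p); rewrite /proj p0.
  by apply: one_point_compactification_some_nbhs; exact: some_iter_continuous.
have [_ [[_ _ <-] [[y Vy [<-]] Uy]]] := clp _ near_p.
by exists (orbit y n); split.
Qed.

Definition embed_orbit (x : X) : Z :=
  exist _ (orbit x) (mem_set (@orbit_closure_orbit x)).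

Definition shift_closure (z : Z) : Z :=
  exist _ (shift (set_val z)) (mem_set (orbit_closure_shift (set_valP z))).

Definition first_coord (z : Z) : Y := set_val z 0%N.

Lemma shift_closure_continuous : continuous shift_closure.
Proof.
apply: continuous_set_type => z.
exact: (continuous_comp (set_val_continuous (x:=z)) (shift_continuous (x:=set_val z))).
Qed.

Lemma shift_closure_embed_orbit : shift_closure \o embed_orbit = embed_orbit \o T.
Proof. by apply: funext => x; apply: val_inj; exact: shift_orbit. Qed.

Lemma embed_orbit_embedding : topological_embedding embed_orbit.
Proof.
split.
- by move=> x y /(congr1 first_coord) [].
- exact/continuous_set_type/orbit_continuous.
- move=> U oU; pose V := (fun q : P => q 0%N) @^-1` (Some @` U).
  exists (set_val @^-1` V); split.
    have head_continuous : continuous (fun q : P => q 0%N) := @proj_continuous nat _ 0%N.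
    exists V => //; apply: (proj1 (continuousP _) head_continuous).
    exact: one_point_compactification_open_some.
  by apply/seteqP; split => x /=; [case=> y Uy [<-]|exists x].
Qed.

Lemma first_coord_continuous : continuous first_coord.
Proof.
move=> z; exact: (continuous_comp (set_val_continuous (x:=z))
  (@proj_continuous nat (fun _ => Y) 0%N (set_val z))).
Qed.

Lemma first_coord_outside_orbits (z : Z) : hausdorff_space Y ->
  ~ (exists x, embed_orbit x = z) -> first_coord z = None.
Proof.
move=> Yhausdorff zout; rewrite /first_coord.
case z0 : (set_val z 0%N) => [x|] //; exfalso; apply: zout.
by exists x; apply: val_inj; rewrite /= (orbit_closure_some Yhausdorff (set_valP z) z0).
Qed.

End orbit_closure.

Theorem lemma2p3 (X : topologicalType) (T : X -> X) :
  metrizable (one_point_compactification X) ->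
  continuous T ->
  exists (Z : topologicalType) (S : Z -> Z) (iota : X -> Z)
         (pi : Z -> one_point_compactification X),
    [/\ compact [set: Z], metrizable Z, continuous S,
        topological_embedding iota &
        S \o iota = iota \o T] /\
    [/\ (forall x : X, pi (iota x) = Some x),
        (forall z : Z, ~ (exists x : X, iota x = z) -> pi z = None) &
        continuous pi].
Proof.
move=> Ymetrizable T_continuous.
have Yhausdorff := metrizable_hausdorff Ymetrizable.
exists (set_type (orbit_closure T)), (shift_closure (T := T)),
  (embed_orbit T), (@first_coord _ T).
split; split.
- exact: compact_orbit_closure.
- exact/metrizable_set_type/metrizable_nat_power.
- exact: shift_closure_continuous.
- exact: embed_orbit_embedding.
- exact: shift_closure_embed_orbit.
- by [].
- by move=> z; exact: first_coord_outside_orbits.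
- exact: first_coord_continuous.
Qed.
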